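(* Let $T$ be a sparse tournament of order $n>4$ and let $\sigma$ be a sparse ordering of $V(T)$. Then for every vertex $v$ with $d^-(v)=i$, the position of $v$ in $\sigma$ (positions numbered $1,\dots,n$) belongs to $\{i,i+1,i+2\}\cap[n]$.
   Context: A tournament is a digraph with exactly one arc between each pair of distinct vertices; $d^-(v)$ is the in-degree of $v$ and $[n]=\{1,\dots,n\}$. For an ordering $\sigma$ of $V(T)$, an arc $(x,y)$ is backward if $y$ precedes $x$ in $\sigma$. An ordering is sparse if every vertex is incident to at most one backward arc; a tournament is sparse if it admits a sparse ordering. *)

From mathcomp Require Import all_boot.
Set Implicit Arguments. Unset Strict Implicit. Unset Printing Implicit Defensive.

Definition is_tournament (V : finType) (arc : rel V) : Prop :=
  (forall x, ~~ arc x x) /\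
  (forall x y, x != y -> (arc x y && ~~ arc y x) || (arc y x && ~~ arc x y)).

Definition indeg (V : finType) (arc : rel V) (v : V) : nat :=
  #|[set u | arc u v]|.

(* An ordering of V is an injective (hence bijective) map to positions
   0..#|V|-1 (0-based; position p corresponds to position p+1 in the paper). *)
Definition is_ordering (V : finType) (pos : V -> 'I_#|V|) : Prop :=
  injective pos.

Definition backward (V : finType) (arc : rel V) (pos : V -> 'I_#|V|) (x y : V) : bool :=
  arc x y && (pos y < pos x).

(* Backward arcs incident to v, represented by their other endpoint. *)
Definition backward_nbrs (V : finType) (arc : rel V) (pos : V -> 'I_#|V|) (v : V) : {set V} :=
  [set u | backward arc pos v u || backward arc pos u v].

Definition sparse_ordering (V : finType) (arc : rel V) (pos : V -> 'I_#|V|) : Prop :=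
  is_ordering pos /\ forall v, #|backward_nbrs arc pos v| <= 1.

Definition sparse_tournament (V : finType) (arc : rel V) : Prop :=
  exists pos : V -> 'I_#|V|, sparse_ordering arc pos.

From mathcomp Require Import all_boot.

(* Let A be the set of in-neighbours of v and B the set of vertices placed
   before v, so that #|A| = d^-(v) and #|B| is the 0-based position of v.
   A vertex of A \ B sends a backward arc to v and a vertex of B \ A receives
   one from v; since v lies on at most one backward arc, #|A| and #|B| differ
   by at most one. *)

Lemma card_ord_lt n (k : 'I_n) : #|[set j : 'I_n | j < k]| = k.
Proof.
have le_kn : k <= n by apply: ltnW.
have -> : [set j : 'I_n | j < k] = [set widen_ord le_kn j | j : 'I_k].
  apply/setP => j; rewrite inE; apply/idP/imsetP.
  - by move=> lt_jk; exists (Ordinal lt_jk) => //; apply: val_inj.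
  - by case=> j' _ ->; rewrite /= ltn_ord.
rewrite card_imset ?card_ord // => j1 j2 /(congr1 val) /= ?; exact: val_inj.
Qed.

Lemma leq_card_addD {T : finType} (A B : {set T}) : #|A| <= #|B| + #|A :\: B|.
Proof.
by rewrite -(cardsID B A) leq_add2r; apply/subset_leq_card/subsetIr.
Qed.

Section SparseOrdering.

Variables (V : finType) (arc : rel V) (pos : V -> 'I_#|V|).
Hypothesis pos_inj : injective pos.

Definition in_nbrs (v : V) : {set V} := [set u | arc u v].

Definition predecessors (v : V) : {set V} := [set u | pos u < pos v].

Lemma card_predecessors v : #|predecessors v| = pos v.
Proof.
have pos_bij : bijective pos by apply: inj_card_bij => //; rewrite card_ord.
rewrite -[RHS]card_ord_lt -(on_card_preimset (onW_bij _ pos_bij)).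
by apply: eq_card => u; rewrite !inE.
Qed.

Lemma late_in_nbr_backward v u :
  (forall x, ~~ arc x x) ->
  u \in in_nbrs v :\: predecessors v -> u \in backward_nbrs arc pos v.
Proof.
move=> arc_irr; rewrite !inE /backward -leqNgt => /andP[le_vu arc_uv].
have neq_uv : u != v by apply: contraTneq arc_uv => ->; rewrite arc_irr.
have neq_pos : pos v != pos u by apply: contra neq_uv => /eqP/pos_inj ->.
by rewrite arc_uv [pos v < _]ltn_neqAle neq_pos le_vu orbT.
Qed.

Lemma early_non_in_nbr_backward v u :
  is_tournament arc ->
  u \in predecessors v :\: in_nbrs v -> u \in backward_nbrs arc pos v.
Proof.
move=> [_ arc_tot]; rewrite !inE /backward => /andP[not_arc_uv lt_uv].
have neq_uv : u != v by apply: contraTneq lt_uv => ->; rewrite ltnn.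
move: (arc_tot _ _ neq_uv); rewrite (negbTE not_arc_uv) /= andbT orbF => ->.
by rewrite lt_uv.
Qed.

Hypothesis arc_tour : is_tournament arc.
Hypothesis pos_sparse : forall v, #|backward_nbrs arc pos v| <= 1.

Lemma indeg_le_pos_succ v : indeg arc v <= (pos v).+1.
Proof.
rewrite -card_predecessors -addn1 (leq_trans (leq_card_addD (in_nbrs v) (predecessors v))) //.
rewrite leq_add2l (leq_trans _ (pos_sparse v)) //; apply/subset_leq_card/subsetP.
by move=> u; apply: late_in_nbr_backward; case: arc_tour.
Qed.

Lemma pos_le_indeg_succ v : pos v <= (indeg arc v).+1.
Proof.
rewrite -card_predecessors -addn1 (leq_trans (leq_card_addD (predecessors v) (in_nbrs v))) //.
rewrite leq_add2l (leq_trans _ (pos_sparse v)) //; apply/subset_leq_card/subsetP.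
by move=> u; apply: early_non_in_nbr_backward.
Qed.

End SparseOrdering.

Theorem mainTheorem10 (V : finType) (arc : rel V) (pos : V -> 'I_#|V|) :
  is_tournament arc ->
  sparse_tournament arc ->
  4 < #|V| ->
  sparse_ordering arc pos ->
  forall v : V, forall i : nat, indeg arc v = i ->
    i <= (pos v).+1 <= i + 2 /\ 1 <= (pos v).+1 <= #|V|.
Proof.
move=> arc_tour _ _ [pos_inj pos_sparse] v i <-.
split; last by rewrite ltn_ord.
by rewrite indeg_le_pos_succ // addn2 ltnS pos_le_indeg_succ.
Qed.
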